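(* There exists a non-adaptive algorithm with one-sided error that, given a proximity parameter $0<\epsilon<1$, query access to a function $f\colon[n]\to\mathbb{R}$ (where $[n]=\{0,\dots,n-1\}$) and sample access to an unknown probability distribution $\mathcal{D}$ on $[n]$, accepts with probability $1$ if $f$ is convex and rejects with probability at least $2/3$ if $f$ is $\epsilon$-far from convex with respect to $\mathcal{D}$, using $O\!\left(\frac{\log n}{\epsilon}\right)$ queries to $f$ and $O\!\left(\frac1\epsilon\right)$ samples from $\mathcal{D}$.
   Context: A function $f\colon X\to\mathbb{R}$ on a finite set $X\subseteq\mathbb{R}^d$ is convex if for every finite collection $x_1,\dots,x_k\in X$ and reals $\lambda_i\ge0$ with $\sum_i\lambda_i=1$ and $\sum_i\lambda_ix_i\in X$, one has $f(\sum_i\lambda_ix_i)\le\sum_i\lambda_if(x_i)$. For a distribution $\mathcal{D}$ on $X$, a function $g$ is $\epsilon$-far from convex with respect to $\mathcal{D}$ if $\Pr_{x\sim\mathcal{D}}[g(x)\ne h(x)]\ge\epsilon$ for every convex $h\colon X\to\mathbb{R}$. Non-adaptive means all queries are chosen before any function value is observed. *)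

From HB Require Import structures.
From mathcomp Require Import all_boot all_order all_algebra.
From mathcomp Require Import reals.
Set Implicit Arguments. Unset Strict Implicit. Unset Printing Implicit Defensive.
Import Order.TTheory GRing.Theory Num.Theory.
Local Open Scope ring_scope.

Definition convex_on_range (R : realType) (n : nat) (f : 'I_n -> R) : Prop :=
  forall (k : nat) (x : 'I_k -> 'I_n) (lam : 'I_k -> R) (y : 'I_n),
    (forall i, 0 <= lam i) ->
    \sum_(i < k) lam i = 1 ->
    (nat_of_ord y)%:R = \sum_(i < k) lam i * (nat_of_ord (x i))%:R ->
    f y <= \sum_(i < k) lam i * f (x i).

Definition is_distr (R : realType) (n : nat) (D : 'I_n -> R) : Prop :=
  (forall x, 0 <= D x) /\ \sum_(x < n) D x = 1.

Definition far_from_convex (R : realType) (n : nat) (D : 'I_n -> R)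
    (eps : R) (g : 'I_n -> R) : Prop :=
  forall h : 'I_n -> R, convex_on_range h ->
    eps <= \sum_(x < n | g x != h x) D x.

(* A non-adaptive randomized tester with sample access on domain [n]:
   it flips internal coins w (drawn from a finite probability space with
   weights coin_prob), draws sample_num i.i.d. samples xs from D, then
   chooses the list of query points (queries w xs), depending only on the
   coins and the samples (non-adaptivity: before seeing any value of f),
   and finally decides (true = accept) from the coins, the samples and the
   list of values of f on the query points. *)
Record tester (R : realType) (n : nat) := Tester {
  coins : finType;
  coin_prob : coins -> R;
  sample_num : nat;
  queries : coins -> sample_num.-tuple 'I_n -> seq 'I_n;
  decide : coins -> sample_num.-tuple 'I_n -> seq R -> bool
}.
Arguments coins {R n} _.
Arguments coin_prob {R n} _ _.
Arguments sample_num {R n} _.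
Arguments queries {R n} _ _ _.
Arguments decide {R n} _ _ _ _.

Definition valid_coins (R : realType) (n : nat) (T : tester R n) : Prop :=
  (forall w, 0 <= coin_prob T w) /\ \sum_(w : coins T) coin_prob T w = 1.

Definition accept_prob (R : realType) (n : nat) (T : tester R n)
    (D : 'I_n -> R) (f : 'I_n -> R) : R :=
  \sum_(w : coins T) coin_prob T w *
    \sum_(xs : (sample_num T).-tuple 'I_n)
      (\prod_(i < sample_num T) D (tnth xs i)) *
      (decide T w xs (map f (queries T w xs)))%:R.

(* A function on [n] is convex iff every three points p < q < r of
   its graph satisfy slope(p, q) <= slope(q, r).  With K = log2 n, the tester
   draws m ~ 2/eps samples and queries, for each sample x, the point x and the
   points on either side of both ends of each dyadic block of length 2^j
   (j <= K) containing x; it accepts iff all queried triples satisfy the slope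
   condition, so convex functions are always accepted.  Call x good if its own
   query set satisfies the condition.  For x < y the query sets of x and y share
   two adjacent points b - 1, b with x < b <= y (the boundary between the blocks
   of x and y at the coarsest level where they differ), and chaining slopes through
   them shows that the good points satisfy the slope condition as a set.  Then
   the maximum of supporting lines at good points is a convex function agreeing
   with f on them, so if f is eps-far from convex the bad points have mass at
   least eps, and all m samples are good with probability at most
   (1 - eps)^m <= 1 / (1 + m eps) <= 1/3. *)

From HB Require Import structures.
From mathcomp Require Import all_boot all_order all_algebra.
From mathcomp Require Import reals.
From mathcomp Require Import lra zify ring.
Set Implicit Arguments. Unset Strict Implicit. Unset Printing Implicit Defensive.
Import Order.TTheory GRing.Theory Num.Theory.
Local Open Scope ring_scope.

Section ThreeChord.
Variable R : realFieldType.
Implicit Types a b c : R * R.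

Definition slope a b : R := (b.2 - a.2) / (b.1 - a.1).

Definition convex3 a b c : bool := (a.1 < b.1 < c.1) ==> (slope a b <= slope b c).

Lemma three_chord a b c : a.1 < b.1 -> b.1 < c.1 ->
  slope a b <= slope b c -> slope a b <= slope a c <= slope b c.
Proof.
move=> ab bc h.
have dab : 0 < b.1 - a.1 by rewrite subr_gt0.
have dbc : 0 < c.1 - b.1 by rewrite subr_gt0.
have dac : 0 < c.1 - a.1 by rewrite subr_gt0 (lt_trans ab bc).
have avg : slope a c * (c.1 - a.1) = slope a b * (b.1 - a.1) + slope b c * (c.1 - b.1).
  by rewrite /slope !divfK ?gt_eqF //; ring.
by apply/andP; split; nra.
Qed.

Lemma slope_le_of_chord a b c : a.1 < b.1 -> b.1 < c.1 ->
  b.2 * (c.1 - a.1) <= a.2 * (c.1 - b.1) + c.2 * (b.1 - a.1) ->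
  slope a b <= slope b c.
Proof.
move=> ab bc h.
have dab : 0 < b.1 - a.1 by rewrite subr_gt0.
have dbc : 0 < c.1 - b.1 by rewrite subr_gt0.
rewrite /slope ler_pdivrMr // mulrAC ler_pdivlMr //; nra.
Qed.

End ThreeChord.

Lemma expr1B_le_inv (R : realFieldType) (e : R) (m : nat) : 0 <= e <= 1 ->
  (1 - e) ^+ m <= (1 + m%:R * e)^-1.
Proof.
case/andP=> e0 e1; have pos_m : 0 < 1 + m%:R * e by rewrite ltr_wpDr ?mulr_ge0.
rewrite -div1r ler_pdivlMr //.
elim: m {pos_m} => [|m IH]; first by rewrite expr0 mul0r addr0 mul1r.
rewrite exprSr -mulrA; apply: le_trans IH; apply: ler_wpM2l.
  by apply: exprn_ge0; lra.
rewrite -natr1; have : 0 <= m%:R :> R by []; nra.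
Qed.

Lemma truncnS_scale_bounds (R : archiRealFieldType) (eps : R) : 0 < eps <= 1 ->
  2 <= (Num.truncn (2 / eps)).+1%:R * eps <= 3.
Proof.
case/andP=> e0 e1; set t := Num.truncn (2 / eps).
have lo : 2 < t.+1%:R * eps by rewrite -ltr_pdivrMr // truncnS_gt.
have hi : t%:R * eps <= 2 by rewrite -ler_pdivlMr // truncn_le divr_ge0 // ltW.
rewrite -natr1 in lo *; apply/andP; split; lra.
Qed.

Lemma sum_prod_tuple (R : comPzSemiRingType) (T : finType) (m : nat) (g : T -> R) :
  \sum_(xs : m.-tuple T) \prod_(i < m) g (tnth xs i) = (\sum_x g x) ^+ m.
Proof.
rewrite -[m in RHS]card_ord -prodr_const bigA_distr_bigA /=.
rewrite (reindex (fun F : {ffun 'I_m -> T} => [tuple F i | i < m])) /=.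
  by apply: eq_bigr => F _; apply: eq_bigr => i _; rewrite tnth_mktuple.
exists (fun xs : m.-tuple T => [ffun i => tnth xs i]) => [F _|xs _].
  by apply/ffunP => i; rewrite ffunE tnth_mktuple.
by apply: eq_from_tnth => i; rewrite tnth_mktuple ffunE.
Qed.

Definition all_triples (T : Type) (P : T -> T -> T -> bool) (s : seq T) : bool :=
  all (fun p => all (fun q => all (P p q) s) s) s.

Lemma all_triplesP (T : eqType) (P : T -> T -> T -> bool) (s : seq T) :
  reflect {in s & s & s, forall p q r, P p q r} (all_triples P s).
Proof.
apply: (iffP allP) => [h p q r ps qs rs | h p ps].
  by have /allP/(_ q qs)/allP := h p ps; apply.
by apply/allP => q qs; apply/allP => r rs; exact: h.
Qed.

Lemma all_triples_map (T U : Type) (P : U -> U -> U -> bool) (g : T -> U) (s : seq T) :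
  all_triples P (map g s) = all_triples (fun p q r => P (g p) (g q) (g r)) s.
Proof.
rewrite /all_triples all_map; apply: eq_all => p /=; rewrite all_map.
by apply: eq_all => q /=; rewrite all_map.
Qed.

Lemma all_triples_sub (T : eqType) (P : T -> T -> T -> bool) (s s' : seq T) :
  {subset s <= s'} -> all_triples P s' -> all_triples P s.
Proof.
move=> ss' /all_triplesP h; apply/all_triplesP => p q r ps qs rs.
by apply: h; apply: ss'.
Qed.

Lemma size_flatten_map_le (S T : Type) (F : S -> seq T) (s : seq S) (c : nat) :
  (forall x, size (F x) <= c)%N -> (size (flatten (map F s)) <= size s * c)%N.
Proof.
by move=> Fc; elim: s => //= x s IH; rewrite size_cat mulSn leq_add.
Qed.

Section QueryPoints.
Local Open Scope nat_scope.
Variable K : nat.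

Definition block_ends (j x : nat) : seq nat :=
  [:: x %/ 2 ^ j * 2 ^ j - 1; x %/ 2 ^ j * 2 ^ j;
      (x %/ 2 ^ j).+1 * 2 ^ j - 1; (x %/ 2 ^ j).+1 * 2 ^ j].

Definition query_points (x : nat) : seq nat :=
  x :: flatten [seq block_ends j x | j <- iota 0 K.+1].

Lemma size_query_points x : size (query_points x) <= 4 * K + 5.
Proof.
have := @size_flatten_map_le _ _ (block_ends^~ x) (iota 0 K.+1) 4 (fun _ => leqnn 4).
by rewrite /= size_iota; lia.
Qed.

Lemma mem_query_points_self x : x \in query_points x.
Proof. exact: mem_head. Qed.

Lemma mem_query_points_block j x y :
  j <= K -> y \in block_ends j x -> y \in query_points x.
Proof.
move=> jK yx; rewrite inE; apply/orP; right; apply/flatten_mapP.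
by exists j; rewrite ?mem_iota.
Qed.

Lemma query_points_bridge x y : x < y -> y < 2 ^ K.+1 ->
  exists b, [/\ x < b <= y, b - 1 \in query_points x, b \in query_points x,
              b - 1 \in query_points y & b \in query_points y].
Proof.
move=> xy yK; have xK : x < 2 ^ K.+1 by apply: ltn_trans yK.
have same_top : exists j, x %/ 2 ^ j.+1 == y %/ 2 ^ j.+1.
  by exists K; rewrite !divn_small.
(* At the least such level j, x and y lie in adjacent blocks of length 2^j;
   b is the boundary between them. *)
case: (ex_minnP same_top) => j /eqP same_j j_min.
have jK : j <= K by apply: j_min; rewrite !divn_small.
have diff_j : x %/ 2 ^ j != y %/ 2 ^ j.
  case: j same_j j_min jK => [|i] same_j j_min jK.
    by rewrite !expn0 !divn1 ltn_eqF.
  by apply/negP => same_i; have := j_min i same_i; lia.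
have le_j : x %/ 2 ^ j <= y %/ 2 ^ j by apply: leq_div2r; exact: ltnW.
have half_j : x %/ 2 ^ j %/ 2 = y %/ 2 ^ j %/ 2 by rewrite -!divnMA -expnSr.
have adj : y %/ 2 ^ j = (x %/ 2 ^ j).+1 by move: diff_j; lia.
exists (y %/ 2 ^ j * 2 ^ j); split.
- by rewrite leq_divM andbT adj ltn_ceil // expn_gt0.
all: by apply: (mem_query_points_block jK); rewrite /block_ends adj !inE eqxx ?orbT.
Qed.

End QueryPoints.

Lemma convex_on_range_chord (R : realType) (n : nat) (f : 'I_n -> R) (p q r : 'I_n) :
  convex_on_range f -> (p < q < r)%N ->
  f q * ((r : nat)%:R - (p : nat)%:R) <=
    f p * ((r : nat)%:R - (q : nat)%:R) + f r * ((q : nat)%:R - (p : nat)%:R).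
Proof.
move=> cf /andP[pq qr].
set P : R := (p : nat)%:R; set Q : R := (q : nat)%:R; set Rr : R := (r : nat)%:R.
have PQ : P < Q by rewrite ltr_nat.
have QR : Q < Rr by rewrite ltr_nat.
have d0 : 0 < Rr - P by rewrite subr_gt0 (lt_trans PQ QR).
pose x (i : 'I_2) := if i == ord0 then p else r.
pose lam (i : 'I_2) := if i == ord0 then (Rr - Q) / (Rr - P) else (Q - P) / (Rr - P).
have lam_ge0 i : 0 <= lam i by rewrite /lam; case: ifP => _; apply: divr_ge0; lra.
have := cf 2 x lam q lam_ge0; rewrite !big_ord_recl !big_ord0 /x /lam /= !addr0.
have lam_sum : (Rr - Q) / (Rr - P) + (Q - P) / (Rr - P) = 1.
  by field; rewrite gt_eqF.
have lam_bary : Q = (Rr - Q) / (Rr - P) * P + (Q - P) / (Rr - P) * Rr.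
  by field; rewrite gt_eqF.
move=> /(_ lam_sum lam_bary) le_fq.
have -> : f p * (Rr - Q) + f r * (Q - P) =
    ((Rr - Q) / (Rr - P) * f p + (Q - P) / (Rr - P) * f r) * (Rr - P).
  by field; rewrite gt_eqF.
by rewrite ler_wpM2r // ltW.
Qed.

Lemma convex_bigmax_affine (R : realType) (n : nat) (I : finType) (P : pred I)
    (i0 : I) (c d : I -> R) :
  convex_on_range (fun y : 'I_n =>
    \big[Order.max/c i0 + d i0 * (y : nat)%:R]_(i | P i) (c i + d i * (y : nat)%:R)).
Proof.
move=> k x lam y lam_ge0 lam_sum ->.
have affine i : c i + d i * (\sum_(j < k) lam j * (x j : nat)%:R) =
    \sum_(j < k) lam j * (c i + d i * (x j : nat)%:R).
  rewrite mulr_sumr -{1}[c i]mul1r -lam_sum mulr_suml -big_split /=.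
  by apply: eq_bigr => j _; ring.
apply: bigmax_le => [|i Pi]; rewrite affine; apply: ler_sum => j _;
  apply: ler_wpM2l => //; [exact: bigmax_ge_id | exact: le_bigmax_cond].
Qed.

Section Graph.
Variables (R : realType) (n : nat) (f : 'I_n -> R).

Definition graph_pt (x : 'I_n) : R * R := ((x : nat)%:R, f x).

Local Notation sl x y := (slope (graph_pt x) (graph_pt y)).

Definition chord_convex (S : seq 'I_n) : bool :=
  all_triples (fun p q r => convex3 (graph_pt p) (graph_pt q) (graph_pt r)) S.

Lemma graph_pt_lt (p q : 'I_n) : (p < q)%N -> (graph_pt p).1 < (graph_pt q).1.
Proof. by rewrite /= ltr_nat. Qed.

Lemma convex_chord_convex S : convex_on_range f -> chord_convex S.
Proof.
move=> cf; apply/all_triplesP => p q r _ _ _; apply/implyP.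
rewrite /= !ltr_nat => pqr; case/andP: (pqr) => pq qr.
by apply: slope_le_of_chord; rewrite /= ?ltr_nat //; exact: convex_on_range_chord.
Qed.

Section ChordConvexSeq.
Variable S : seq 'I_n.
Hypothesis convS : chord_convex S.

Lemma chord_convex_slope p q r : p \in S -> q \in S -> r \in S ->
  (p < q)%N -> (q < r)%N -> sl p q <= sl q r.
Proof.
move=> pS qS rS pq qr; have /all_triplesP/(_ p q r pS qS rS) := convS.
by rewrite /convex3 /= !ltr_nat pq qr.
Qed.

Lemma chord_convex_slope_right p q r : p \in S -> q \in S -> r \in S ->
  (p <= q)%N -> (q < r)%N -> sl p r <= sl q r.
Proof.
move=> pS qS rS; rewrite leq_eqVlt => /orP[/eqP/val_inj-> _|pq qr]; first exact: lexx.
have /andP[] // := three_chord (graph_pt_lt pq) (graph_pt_lt qr)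
  (chord_convex_slope pS qS rS pq qr).
Qed.

Lemma chord_convex_slope_left p q r : p \in S -> q \in S -> r \in S ->
  (p < q)%N -> (q <= r)%N -> sl p q <= sl p r.
Proof.
move=> pS qS rS pq; rewrite leq_eqVlt => /orP[/eqP/val_inj-> |qr]; first exact: lexx.
have /andP[] // := three_chord (graph_pt_lt pq) (graph_pt_lt qr)
  (chord_convex_slope pS qS rS pq qr).
Qed.

End ChordConvexSeq.

Section ConvexExtension.
Variable G : pred 'I_n.
Hypothesis convG : forall x y z, G x -> G y -> G z ->
  (x < y)%N -> (y < z)%N -> sl x y <= sl y z.

(* A slope between those of the chords from g to the points of G on its left
   and on its right; it exists by [convG]. *)
Definition left_slope (g : 'I_n) : R :=
  \big[Order.max/0]_(g' | G g' && (g' < g)%N) sl g' g.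
Definition supp_slope (g : 'I_n) : R :=
  \big[Order.min/left_slope g]_(g' | G g' && (g < g')%N) sl g g'.

Lemma supp_slope_below g g' : G g -> G g' ->
  f g + supp_slope g * ((g' : nat)%:R - (g : nat)%:R) <= f g'.
Proof.
move=> Gg Gg'; case: (ltngtP g g') => [lt|gt|/val_inj->]; last by rewrite subrr mulr0 addr0.
- have le_sl : supp_slope g <= sl g g' by apply: bigmin_le_cond; rewrite Gg' lt.
  have dp : 0 < (g' : nat)%:R - (g : nat)%:R :> R by rewrite subr_gt0 ltr_nat.
  have : sl g g' * ((g' : nat)%:R - (g : nat)%:R) = f g' - f g by rewrite /= divfK ?gt_eqF.
  nra.
- have le_sl : sl g' g <= supp_slope g.
    apply: le_bigmin => [|i /andP[Gi gi]]; last exact: convG.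
    by apply: le_bigmax_cond; rewrite Gg' gt.
  have dp : 0 < (g : nat)%:R - (g' : nat)%:R :> R by rewrite subr_gt0 ltr_nat.
  have : sl g' g * ((g : nat)%:R - (g' : nat)%:R) = f g - f g' by rewrite /= divfK ?gt_eqF.
  nra.
Qed.

Lemma convex_extension :
  exists2 h : 'I_n -> R, convex_on_range h & forall x, G x -> h x = f x.
Proof.
case: (pickP G) => [g0 Gg0|noG]; last first.
  exists (fun _ => 0) => [k x lam y _ _ _|x]; last by rewrite noG.
  by rewrite big1 // => i _; rewrite mulr0.
pose c g := f g - supp_slope g * (g : nat)%:R.
exists (fun y : 'I_n => \big[Order.max/c g0 + supp_slope g0 * (y : nat)%:R]_(g | G g)
                          (c g + supp_slope g * (y : nat)%:R)).
  exact: convex_bigmax_affine.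
move=> x Gx; apply/eqP; rewrite eq_le; apply/andP; split.
  have below g : G g -> c g + supp_slope g * (x : nat)%:R <= f x.
    move=> Gg; rewrite [leLHS](_ : _ = f g + supp_slope g * ((x : nat)%:R - (g : nat)%:R)).
      exact: supp_slope_below.
    by rewrite /c; ring.
  by apply: bigmax_le => [|g Gg]; apply: below.
have -> : f x = c x + supp_slope x * (x : nat)%:R by rewrite /c subrK.
exact: le_bigmax_cond.
Qed.

Lemma far_from_convex_bad_mass (D : 'I_n -> R) (eps : R) :
  (forall x, 0 <= D x) -> far_from_convex D eps f -> eps <= \sum_(x | ~~ G x) D x.
Proof.
move=> D_ge0 far; have [h convh hf] := convex_extension.
apply: le_trans (far h convh) _; rewrite big_mkcond [leRHS]big_mkcond.
apply: ler_sum => x _; case Gx: (G x); first by rewrite hf // eqxx.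
by case: (f x != h x); rewrite /= ?lexx ?D_ge0.
Qed.

End ConvexExtension.
End Graph.

Section GoodPoints.
Variables (R : realType) (n K : nat) (f : 'I_n -> R).
Local Notation sl x y := (slope (graph_pt f x) (graph_pt f y)).

Definition query_list (x : 'I_n) : seq 'I_n := pmap insub (query_points K x).

Definition good (x : 'I_n) : bool := chord_convex f (query_list x).

Lemma mem_query_list (x p : 'I_n) : (p \in query_list x) = ((p : nat) \in query_points K x).
Proof. by rewrite mem_pmap_sub. Qed.

Lemma query_list_self x : x \in query_list x.
Proof. by rewrite mem_query_list mem_query_points_self. Qed.

Hypothesis n_le : (n <= 2 ^ K.+1)%N.

Lemma query_list_bridge (x y : 'I_n) : (x < y)%N -> exists a b : 'I_n,
  [/\ (x <= a < b)%N, (b <= y)%N,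
      (a \in query_list x) && (a \in query_list y) &
      (b \in query_list x) && (b \in query_list y)].
Proof.
move=> xy; have yK : (y < 2 ^ K.+1)%N by apply: leq_trans n_le.
have [b [/andP[xb b_y] ax bx ay by_]] := query_points_bridge xy yK.
have bn : (b < n)%N by apply: leq_ltn_trans b_y (ltn_ord y).
have an : (b - 1 < n)%N by apply: leq_ltn_trans bn; exact: leq_subr.
exists (Ordinal an), (Ordinal bn); rewrite !mem_query_list /= ax bx ay by_.
by split => //; lia.
Qed.

Lemma good_slope_left (x y : 'I_n) : good x -> good y -> (x < y)%N ->
  exists u, [/\ u \in query_list y, (u < y)%N & sl x y <= sl u y].
Proof.
move=> gx gy xy.
have [a [b [/andP[xa ab] b_y /andP[ax ay] /andP[bx by_]]]] := query_list_bridge xy.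
have xb_ab : sl x b <= sl a b.
  exact: (chord_convex_slope_right gx (query_list_self x) ax bx xa ab).
move: b_y; rewrite leq_eqVlt => /orP[/eqP/val_inj eb | b_y].
  by subst y; exists a.
exists b; split => //.
have ab_by : sl a b <= sl b y.
  exact: (chord_convex_slope gy ay by_ (query_list_self y) ab b_y).
have /andP[_] // := three_chord (graph_pt_lt f (leq_ltn_trans xa ab))
  (graph_pt_lt f b_y) (le_trans xb_ab ab_by).
Qed.

Lemma good_slope_right (y z : 'I_n) : good y -> good z -> (y < z)%N ->
  exists v, [/\ v \in query_list y, (y < v)%N & sl y v <= sl y z].
Proof.
move=> gy gz yz.
have [a [b [/andP[ya ab] bz /andP[ay az] /andP[by_ bz']]]] := query_list_bridge yz.
have ab_az : sl a b <= sl a z.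
  exact: (chord_convex_slope_left gz az bz' (query_list_self z) ab bz).
move: ya; rewrite leq_eqVlt => /orP[/eqP/val_inj ea | ya].
  by subst y; exists b.
exists a; split => //.
have ya_ab : sl y a <= sl a b.
  exact: (chord_convex_slope gy (query_list_self y) ay by_ ya ab).
have /andP[] // := three_chord (graph_pt_lt f ya)
  (graph_pt_lt f (leq_trans ab bz)) (le_trans ya_ab ab_az).
Qed.

Lemma good_chord_convex x y z : good x -> good y -> good z ->
  (x < y)%N -> (y < z)%N -> sl x y <= sl y z.
Proof.
move=> gx gy gz xy yz.
have [u [uy uy_lt xy_uy]] := good_slope_left gx gy xy.
have [v [vy yv_lt yv_yz]] := good_slope_right gy gz yz.
apply: le_trans xy_uy _; apply: le_trans _ yv_yz.
exact: (chord_convex_slope gy uy (query_list_self y) vy uy_lt yv_lt).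
Qed.

End GoodPoints.

Section Tester.
Variables (R : realType) (n K m : nat).

Definition sample_queries (xs : seq 'I_n) : seq 'I_n := flatten (map (query_list K) xs).

Definition chord_test (xs : seq 'I_n) (vals : seq R) : bool :=
  all_triples (@convex3 R) (zip (map (fun p : 'I_n => (p : nat)%:R) (sample_queries xs)) vals).

Definition convexity_tester : tester R n :=
  @Tester R n 'I_1 (fun _ => 1) m (fun _ => sample_queries) (fun _ => chord_test).

Lemma chord_test_graph (f : 'I_n -> R) xs :
  chord_test xs (map f (sample_queries xs)) = chord_convex f (sample_queries xs).
Proof. by rewrite /chord_test zip_map all_triples_map. Qed.

Lemma size_sample_queries xs : (size (sample_queries xs) <= size xs * (4 * K + 5))%N.
Proof.
apply: size_flatten_map_le => x; apply: leq_trans (size_query_points K x).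
by rewrite size_pmap count_size.
Qed.

Lemma sample_good (f : 'I_n -> R) xs x :
  chord_convex f (sample_queries xs) -> x \in xs -> good K f x.
Proof.
move=> conv xxs; apply: all_triples_sub conv => p px.
by apply/flatten_mapP; exists x.
Qed.

Lemma convexity_tester_complete (D f : 'I_n -> R) :
  is_distr D -> convex_on_range f -> accept_prob convexity_tester D f = 1.
Proof.
move=> [_ D_sum] cf; rewrite /accept_prob big_ord1 mul1r /=.
under eq_bigr do rewrite chord_test_graph convex_chord_convex // mulr1.
by rewrite sum_prod_tuple D_sum expr1n.
Qed.

Lemma convexity_tester_sound (D f : 'I_n -> R) : (forall x, 0 <= D x) ->
  accept_prob convexity_tester D f <= (\sum_(x | good K f x) D x) ^+ m.
Proof.
move=> D_ge0; rewrite /accept_prob big_ord1 mul1r /=.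
pose D_good x := if good K f x then D x else 0.
have -> : \sum_(x | good K f x) D x = \sum_x D_good x by rewrite big_mkcond.
rewrite -sum_prod_tuple.
apply: ler_sum => xs _; rewrite chord_test_graph.
have [conv|_] := boolP (chord_convex f _); last first.
  by rewrite mulr0; apply: prodr_ge0 => i _; rewrite /D_good; case: ifP.
rewrite mulr1; apply: ler_prod => i _.
by rewrite /D_good (sample_good conv (mem_tnth i xs)) D_ge0 lexx.
Qed.

Lemma convexity_tester_far (D f : 'I_n -> R) (eps : R) :
  is_distr D -> (n <= 2 ^ K.+1)%N -> 2 <= m%:R * eps ->
  far_from_convex D eps f -> accept_prob convexity_tester D f <= 1 / 3.
Proof.
move=> [D_ge0 D_sum] n_le m_eps far.
apply: le_trans (convexity_tester_sound _ D_ge0) _.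
have bad := far_from_convex_bad_mass (good_chord_convex n_le) D_ge0 far.
have good_mass : \sum_(x | good K f x) D x = 1 - \sum_(x | ~~ good K f x) D x.
  by rewrite -D_sum [\sum_(x < n) D x](bigID (good K f)) /= addrK.
have good_ge0 : 0 <= \sum_(x | good K f x) D x by rewrite sumr_ge0.
have eps_ge0 : 0 <= eps by have : 0 <= m%:R :> R by []; nra.
have good_le : \sum_(x | good K f x) D x <= 1 - eps by lra.
apply: le_trans (lerXn2r m _ _ good_le) _; rewrite ?nnegrE //; first lra.
apply: le_trans (expr1B_le_inv m _) _; first by apply/andP; lra.
by rewrite div1r lef_pV2 ?posrE; lra.
Qed.

End Tester.

Theorem theorem1p2 (R : realType) :
  exists C : R, 0 < C /\
  forall (n : nat) (eps : R), (2 <= n)%N -> 0 < eps -> eps < 1 ->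
  exists T : tester R n,
    valid_coins T /\
    (* O(log n / eps) queries, for every outcome of coins and samples *)
    (forall w xs, (size (queries T w xs))%:R <= C * (trunc_log 2 n)%:R / eps) /\
    (* O(1 / eps) samples *)
    (sample_num T)%:R <= C / eps /\
    forall (D : 'I_n -> R) (f : 'I_n -> R), is_distr D ->
      (convex_on_range f -> accept_prob T D f = 1) /\
      (far_from_convex D eps f -> accept_prob T D f <= 1 / 3).
Proof.
exists 27; split => // n eps n2 e0 e1.
set K := trunc_log 2 n; set m := (Num.truncn (2 / eps)).+1.
have n_le : (n <= 2 ^ K.+1)%N by apply: ltnW; exact: trunc_log_ltn.
have K_ge1 : (1 <= K)%N by rewrite trunc_log_gt0.
have /andP[m_lo m_hi] : 2 <= m%:R * eps <= 3 by rewrite truncnS_scale_bounds // e0 ltW.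
have m_le : m%:R <= 3 / eps by rewrite ler_pdivlMr.
exists (@convexity_tester R n K m); split; [|split; [|split]].
- by split => [w|]; rewrite ?big_ord1.
- move=> w xs; have size_le := size_sample_queries K xs; rewrite size_tuple in size_le.
  apply: le_trans (_ : (m * (9 * K))%:R <= _).
    by rewrite ler_nat (leq_trans size_le) // leq_mul2l; lia.
  have -> : 27 * K%:R / eps = 3 / eps * (9 * K)%:R by rewrite natrM; ring.
  by rewrite natrM ler_wpM2r.
- have : 0 < eps^-1 by rewrite invr_gt0.
  lra.
move=> D f Dd; split; first exact: convexity_tester_complete.
exact: convexity_tester_far.
Qed.
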